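(* Let $\mathcal L$ be a linearly ordered MV-algebra that has a discrete point. If $\mathcal F$ is a prime lattice filter of $\mathcal L$ with $\mathcal K(\mathcal F)=\{1\}$, then $\mathcal F$ is principal, i.e. $\mathcal F=\{x : x\ge p\}$ for some $p\in L$.
   Context: $\mathcal L=(L,\oplus,\lnot,0)$ is an MV-algebra, with $1=\lnot0$ and $x\to y=\lnot x\oplus y$. A discrete point is an element having an immediate successor or an immediate predecessor in the order. A lattice filter is a nonempty upward-closed subset closed under $\wedge$. It is prime if it is proper and $a\vee b\in\mathcal F$ implies $a\in\mathcal F$ or $b\in\mathcal F$. The kernel of $\mathcal F$ is $\mathcal K(\mathcal F)=\{z:\forall a\notin\mathcal F,\ z\to a\notin\mathcal F\}$. *)

Set Implicit Arguments.

Record MVAlgebra := {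
  mv_car :> Type;
  mv_add : mv_car -> mv_car -> mv_car;
  mv_neg : mv_car -> mv_car;
  mv_zero : mv_car;
  mv_addA : forall x y z, mv_add x (mv_add y z) = mv_add (mv_add x y) z;
  mv_addC : forall x y, mv_add x y = mv_add y x;
  mv_add0 : forall x, mv_add x mv_zero = x;
  mv_negK : forall x, mv_neg (mv_neg x) = x;
  mv_add1 : forall x, mv_add x (mv_neg mv_zero) = mv_neg mv_zero;
  mv_luk : forall x y,
      mv_add (mv_neg (mv_add (mv_neg x) y)) y =
      mv_add (mv_neg (mv_add (mv_neg y) x)) x
}.

Section Ops.
Variable L : MVAlgebra.

Definition mv_one : L := mv_neg L (mv_zero L).
Definition mv_imp (x y : L) : L := mv_add L (mv_neg L x) y.
Definition mv_le (x y : L) : Prop := mv_imp x y = mv_one.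
Definition mv_lt (x y : L) : Prop := mv_le x y /\ x <> y.
Definition mv_join (x y : L) : L :=
  mv_add L (mv_neg L (mv_add L (mv_neg L x) y)) y.
Definition mv_meet (x y : L) : L :=
  mv_neg L (mv_join (mv_neg L x) (mv_neg L y)).

Definition linearly_ordered : Prop := forall x y, mv_le x y \/ mv_le y x.

Definition immediate_successor (a b : L) : Prop :=
  mv_lt a b /\ ~ (exists c, mv_lt a c /\ mv_lt c b).

Definition discrete_point (a : L) : Prop :=
  (exists b, immediate_successor a b) \/ (exists b, immediate_successor b a).

Definition lattice_filter (F : L -> Prop) : Prop :=
  (exists x, F x) /\
  (forall x y, F x -> mv_le x y -> F y) /\
  (forall x y, F x -> F y -> F (mv_meet x y)).

Definition prime_filter (F : L -> Prop) : Prop :=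
  lattice_filter F /\
  (exists x, ~ F x) /\
  (forall a b, F (mv_join a b) -> F a \/ F b).

Definition kernel (F : L -> Prop) (z : L) : Prop :=
  forall a, ~ F a -> ~ F (mv_imp z a).

Definition principal_filter (F : L -> Prop) : Prop :=
  exists p : L, forall x, F x <-> mv_le p x.

End Ops.

From Stdlib Require Import Classical.
Set Implicit Arguments.

(* A discrete point yields a pair a < b with b the immediate
   successor of a; in a chain, their truncated difference e = b ⊖ a is an
   atom: e ≠ 0 and e ≤ c for every c ≠ 0.  Adding an atom to an element x
   outside an up-closed set F jumps into F only if F is the principal filter
   generated by e ⊕ x: any y ∈ F lies strictly above x, so y ⊖ x ≠ 0,
   so e ≤ y ⊖ x and e ⊕ x ≤ (y ⊖ x) ⊕ x = y.  Hence, if F is not principal,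
   e ⊕ x = ¬e → x stays outside F for every x ∉ F, i.e. ¬e lies in the
   kernel of F; the hypothesis K(F) = {1} then forces e = 0, a contradiction. *)

Section MVArithmetic.
Variable L : MVAlgebra.
Local Notation "x (+) y" := (mv_add L x y) (at level 50, left associativity).
Local Notation "~~ x" := (mv_neg L x) (at level 35, right associativity).
Local Notation O := (mv_zero L).
Local Notation I := (mv_one L).
Local Notation le := (@mv_le L).
Local Notation lt := (@mv_lt L).

Definition mv_diff (y x : L) : L := ~~ (~~ y (+) x).

Definition atom (e : L) : Prop := e <> O /\ forall c, c <> O -> le e c.

Lemma neg_one : ~~ I = O.
Proof. unfold mv_one. apply mv_negK. Qed.

Lemma add0l x : O (+) x = x.
Proof. rewrite mv_addC. apply mv_add0. Qed.

Lemma add1l x : I (+) x = I.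
Proof. rewrite mv_addC. apply mv_add1. Qed.

Lemma add_negl x : ~~ x (+) x = I.
Proof.
  pose proof (mv_luk L x I) as H.
  unfold mv_one in *. rewrite mv_add1, mv_negK, add0l in H.
  symmetry. exact H.
Qed.

Lemma le_top x : le x I.
Proof. apply mv_add1. Qed.

Lemma join_le x y : le x y -> ~~ (~~ x (+) y) (+) y = y.
Proof. unfold mv_le, mv_imp. intros H. rewrite H, neg_one. apply add0l. Qed.

Lemma le_antisym x y : le x y -> le y x -> x = y.
Proof.
  intros Hxy Hyx. pose proof (mv_luk L x y) as H.
  rewrite (join_le Hxy), (join_le Hyx) in H. symmetry. exact H.
Qed.

Lemma le_addr x c : le x (x (+) c).
Proof. unfold mv_le, mv_imp. rewrite mv_addA, add_negl. apply add1l. Qed.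

Lemma add_diff x y : le x y -> x (+) mv_diff y x = y.
Proof. intros H. unfold mv_diff. rewrite mv_addC, mv_luk. apply join_le, H. Qed.

Lemma le_add2l x u v : le u v -> le (x (+) u) (x (+) v).
Proof. intros H. rewrite <- (add_diff H), mv_addA. apply le_addr. Qed.

Lemma diff_eq0_le {y x} : mv_diff y x = O -> le y x.
Proof.
  intros E. unfold mv_le, mv_imp.
  rewrite <- (mv_negK L (~~ y (+) x)). unfold mv_diff in E. rewrite E. reflexivity.
Qed.

Lemma diff_neq0 x y : lt x y -> mv_diff y x <> O.
Proof.
  intros [Hle Hne] E. apply Hne, le_antisym; [exact Hle | exact (diff_eq0_le E)].
Qed.

Lemma absorbed_join {a c} : a (+) c = a -> ~~ (~~ a (+) ~~ c) (+) ~~ c = I.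
Proof. intros E. rewrite mv_luk, mv_negK, (mv_addC L c a), E. apply add_negl. Qed.

Lemma diff_le_of_add {y x c} : x (+) c = y -> le (mv_diff y x) c.
Proof.
  intros E. unfold mv_le, mv_imp, mv_diff.
  rewrite mv_negK, <- E, <- mv_addA, (mv_addC L x c), add_negl. reflexivity.
Qed.

Section Chain.
Hypothesis Lin : @linearly_ordered L.

Lemma absorbed_eq0 {a c} : a <> I -> a (+) c = a -> c = O.
Proof.
  intros Ha E. pose proof (absorbed_join E) as HJ.
  destruct (Lin a (~~ c)) as [H | H].
  - rewrite (join_le H) in HJ. rewrite <- (mv_negK L c), HJ. apply neg_one.
  - rewrite mv_luk, (join_le H) in HJ. contradiction.
Qed.

Lemma immediate_successor_atom a b :
  @immediate_successor L a b -> atom (mv_diff b a).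
Proof.
  intros [[Hab Hne] Hgap]. split; [exact (diff_neq0 (conj Hab Hne)) |].
  intros c Hc. destruct (classic (le (mv_diff b a) c)) as [|Hn]; [assumption |].
  exfalso. destruct (Lin (mv_diff b a) c) as [|Hce]; [contradiction |].
  assert (Ha1 : a <> I) by (intros ->; apply Hne, le_antisym; [exact Hab | apply le_top]).
  assert (Hlow : le a (a (+) c)) by apply le_addr.
  assert (Hup : le (a (+) c) b).
  { rewrite <- (add_diff Hab). apply le_add2l, Hce. }
  destruct (classic (a (+) c = a)) as [Ea | Na];
    [exact (Hc (absorbed_eq0 Ha1 Ea)) |].
  destruct (classic (a (+) c = b)) as [Eb | Nb];
    [exact (Hn (diff_le_of_add Eb)) |].
  apply Hgap. exists (a (+) c). split; split; auto.
Qed.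

Lemma atom_jump_principal {F : L -> Prop} {e x} :
  (forall u v, F u -> le u v -> F v) -> atom e ->
  ~ F x -> F (e (+) x) -> forall y, F y <-> le (e (+) x) y.
Proof.
  intros Up [_ He] Fx Fex y. split; [intros Fy | intros Hy; exact (Up _ _ Fex Hy)].
  assert (Hxy : le x y).
  { destruct (Lin x y) as [|Hyx]; [assumption |].
    exfalso. exact (Fx (Up _ _ Fy Hyx)). }
  assert (Hdiff : mv_diff y x <> O)
    by (apply diff_neq0; split; [exact Hxy | intros ->; contradiction]).
  rewrite (mv_addC L e x), <- (add_diff Hxy). apply le_add2l, He, Hdiff.
Qed.

Lemma atom_compl_kernel {F : L -> Prop} {e} :
  (forall u v, F u -> le u v -> F v) -> atom e ->
  ~ @principal_filter L F -> @kernel L F (~~ e).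
Proof.
  intros Up He Hnp x Fx Fex. unfold mv_imp in Fex. rewrite mv_negK in Fex.
  apply Hnp. exists (e (+) x). exact (atom_jump_principal Up He Fx Fex).
Qed.

End Chain.
End MVArithmetic.

Theorem mainTheorem12 (L : MVAlgebra) (F : L -> Prop) :
  linearly_ordered L ->
  (exists a : L, @discrete_point L a) ->
  @prime_filter L F ->
  (forall z : L, @kernel L F z <-> z = mv_one L) ->
  @principal_filter L F.
Proof.
  intros Lin [a0 Hd] [[_ [Up _]] _] HK.
  assert (Hsucc : exists a b, @immediate_successor L a b)
    by (destruct Hd as [[b H] | [b H]]; eauto).
  destruct Hsucc as [a [b Hab]].
  pose proof (immediate_successor_atom Lin Hab) as Hatom.
  apply NNPP. intros Hnp.
  pose proof (proj1 (HK _) (atom_compl_kernel Lin Up Hatom Hnp)) as Hone.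
  apply (proj1 Hatom).
  rewrite <- (mv_negK L (mv_diff L b a)), Hone. apply neg_one.
Qed.
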